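(* Consider the stochastic epidemic model described in the context under the linear control policy $u(k)=K\,I(k)$, $k\ge0$, with a constant gain $K$. Suppose $$\overline{\delta}<\frac{(1-d_{\max})\,\overline{v}}{v_{\max}}\qquad\text{and}\qquad \frac{\overline{\delta}-\overline{d_I}}{\overline{v}}<K<\frac{1-d_{\max}}{v_{\max}}.$$ Then: (i) $\lim_{k\to\infty}\mathbb{E}[I(k)]/I_0=0$; (ii) $\mathbb{E}[I(k)]\le I_0$ for all $k\ge 0$; (iii) if $K=(\overline{\delta}-\overline{d_I})/\overline{v}$, then $\mathbb{E}[I(k)]=I_0$ for all $k$.
   Context: Time is indexed by days $k=0,1,2,\dots$. Let $(\delta(k))_{k\ge0}$, $(d_I(k))_{k\ge0}$, $(v(k))_{k\ge0}$ be three mutually independent sequences of random variables, each sequence i.i.d. in $k$, with $0\le \delta(k)\le \delta_{\max}$, $0\le d_I(k)\le d_{\max}$ where $d_{\max}<1$, and $0<v_{\min}\le v(k)\le v_{\max}\le 1$; moreover $\delta_{\max}$ lies in the support of $\delta(k)$, $d_{\max}$ in the support of $d_I(k)$, and $v_{\min},v_{\max}$ in the support of $v(k)$. Write $\overline{\delta}=\mathbb{E}[\delta(k)]$, $\overline{d_I}=\mathbb{E}[d_I(k)]$, $\overline{v}=\mathbb{E}[v(k)]$. Given a control sequence $u(k)\ge 0$, the susceptible, infected, recovered and deceased cases evolve by $S(k+1)=S(k)-\delta(k)I(k)$, $I(k+1)=(1+\delta(k))I(k)-v(k)u(k)-d_I(k)I(k)$, $R(k+1)=R(k)+v(k)u(k)$,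 $D(k+1)=D(k)+d_I(k)I(k)$, with initial values $S(0)=S_0$, $I(0)=I_0>0$, $R(0)=D(0)=0$, where $I_0\delta_{\max}<S_0$. *)

From HB Require Import structures.
From mathcomp Require Import all_boot all_order all_algebra.
From mathcomp Require Import all_classical all_reals all_analysis.
Set Implicit Arguments. Unset Strict Implicit. Unset Printing Implicit Defensive.
Import Order.TTheory GRing.Theory Num.Theory.
Local Open Scope classical_set_scope.
Local Open Scope ring_scope.

Section defs.
Context {d : measure_display} {T : measurableType d} {R : realType}.
Variable P : probability T R.

Definition mean (X : T -> R) : R := fine ('E_P[X])%E.

(* The three sequences (delta k), (dI k), (v k) are mutually independent
   sequences of mutually independent random variables: the whole family
   {delta k, dI k, v k : k} is mutually independent.  Stated as the product
   rule over every initial segment k < n with arbitrary Borel sets (taking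
   some sets to be setT gives the product rule for every finite subfamily). *)
Definition joint_indep (delta dI v : nat -> T -> R) : Prop :=
  forall (n : nat) (A B C : nat -> set R),
    (forall k, measurable (A k)) -> (forall k, measurable (B k)) ->
    (forall k, measurable (C k)) ->
    P (\big[setI/setT]_(k < n)
          (delta k @^-1` A k `&` dI k @^-1` B k `&` v k @^-1` C k))
    = (\prod_(k < n)
          (P (delta k @^-1` A k) * P (dI k @^-1` B k) * P (v k @^-1` C k)))%E.

Definition ident_distr (X : nat -> T -> R) : Prop :=
  forall k (A : set R), measurable A -> P (X k @^-1` A) = P (X 0%N @^-1` A).

Definition in_support (X : T -> R) (a : R) : Prop :=
  forall e : R, 0 < e ->
    let N := [set w | `|X w - a| < e] in (0 < P N)%E.
End defs.

Fixpoint Itraj {T : Type} {R : pzRingType} (delta dI v : nat -> T -> R)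
    (K I0 : R) (k : nat) (w : T) : R :=
  match k with
  | 0 => I0
  | k'.+1 =>
      let Ik := Itraj delta dI v K I0 k' w in
      (1 + delta k' w) * Ik - v k' w * (K * Ik) - dI k' w * Ik
  end.

From HB Require Import structures.
From mathcomp Require Import all_boot all_order all_algebra.
From mathcomp Require Import all_classical all_reals all_analysis.
From mathcomp Require Import ring lra measurable_realfun.
(* Under the control u = K I, day k multiplies the infected count by
   1 + delta(k) - K v(k) - dI(k), whose variables are independent of I(k),
   a function of the earlier days only.  Hence E[I(k)] = I0 m^k with
   m = 1 + E delta - K E v - E dI, and the hypotheses on K say exactly that
   0 < m < 1, resp. m = 1.
   Independence is only available as a product rule on rectangles, so the
   factorization is proved by induction on k in the stronger form
   E[I(k) 1_A] = I0 m^k P(A) for every rectangle A leaving the days before k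
   free.  The induction step multiplies by a day-k variable X, and reduces to
   the tail events {X >= t} by approximating X uniformly by staircase
   functions, i.e. combinations of tail indicators. *)

Set Implicit Arguments. Unset Strict Implicit. Unset Printing Implicit Defensive.
Import Order.TTheory GRing.Theory Num.Theory.
Local Open Scope classical_set_scope.
Local Open Scope ring_scope.

Section bounded_rv.
Context {d : measure_display} {T : measurableType d} {R : realType}.
Variable P : probability T R.

Definition bounded_rv (f : T -> R) :=
  measurable_fun setT f /\ exists C : R, forall w, `|f w| <= C.

Definition expectR (f : T -> R) : R := \int[P]_w f w.

Lemma bounded_rv_integrable f : bounded_rv f -> P.-integrable setT (EFin \o f).
Proof.
move=> [mf [C hC]]; apply/integrableP; split; first exact/measurable_EFinP.
have C0 : 0 <= C by apply: le_trans (hC point).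
apply: (@le_lt_trans _ _ (C%:E * P setT)%E).
  apply: integral_le_bound => //; first exact/measurable_EFinP.
  by apply: aeW => w _ /=; rewrite lee_fin.
by rewrite probability_setT mule1 ltry.
Qed.

Lemma expectE_bounded_rv f : bounded_rv f -> ('E_P[f] = (expectR f)%:E)%E.
Proof.
move=> bf; rewrite unlock /expectR /Rintegral fineK //.
exact: integrable_fin_num (bounded_rv_integrable bf).
Qed.

Lemma mean_bounded_rv f : bounded_rv f -> mean P f = expectR f.
Proof. by move=> bf; rewrite /mean expectE_bounded_rv. Qed.

Lemma bounded_rv_itv f (a b : R) : measurable_fun setT f ->
  (forall w, a <= f w <= b) -> bounded_rv f.
Proof.
move=> mf fab; split => //; exists (`|a| + `|b|) => w.
have /andP[af fb] := fab w.
have := normr_ge0 a; have := normr_ge0 b; have := lerNnormlW (lexx `|a|).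
have := ler_norm b; rewrite ler_norml; lra.
Qed.

Lemma bounded_rv_cst c : bounded_rv (fun _ => c).
Proof. by split; [exact: measurable_cst | exists `|c|]. Qed.

Lemma bounded_rv_indic A : measurable A -> bounded_rv (\1_A : T -> R).
Proof.
move=> mA; split; first exact: measurable_indic.
by exists 1 => w; rewrite /indic; case: (w \in A); rewrite ?normr1 ?normr0.
Qed.

Lemma bounded_rvD f g : bounded_rv f -> bounded_rv g -> bounded_rv (fun w => f w + g w).
Proof.
move=> [mf [C hC]] [mg [D hD]]; split; first exact: measurable_funD.
by exists (C + D) => w; apply: le_trans (ler_normD _ _) _; exact: lerD.
Qed.

Lemma bounded_rvN f : bounded_rv f -> bounded_rv (fun w => - f w).
Proof.
move=> [mf [C hC]]; split; first exact: measurableT_comp.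
by exists C => w; rewrite normrN.
Qed.

Lemma bounded_rvB f g : bounded_rv f -> bounded_rv g -> bounded_rv (fun w => f w - g w).
Proof. by move=> bf bg; apply: bounded_rvD => //; exact: bounded_rvN. Qed.

Lemma bounded_rvM f g : bounded_rv f -> bounded_rv g -> bounded_rv (fun w => f w * g w).
Proof.
move=> [mf [C hC]] [mg [D hD]]; split; first exact: measurable_funM.
by exists (C * D) => w; rewrite normrM; apply: ler_pM.
Qed.

Lemma bounded_rv_sum n (F : 'I_n -> T -> R) : (forall i, bounded_rv (F i)) ->
  bounded_rv (fun w => \sum_(i < n) F i w).
Proof.
elim: n F => [|n IH] F bF.
  by under eq_fun do rewrite big_ord0; exact: bounded_rv_cst.
under eq_fun do rewrite big_ord_recr /=.
by apply: bounded_rvD => //; apply: IH.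
Qed.

Lemma expectR_cst c : expectR (fun _ => c) = c.
Proof.
rewrite /expectR Rintegral_cst //; suff -> : fine (P setT) = 1 by rewrite mulr1.
by rewrite probability_setT.
Qed.

Lemma expectR_indic A : measurable A -> expectR \1_A = fine (P A).
Proof. by move=> mA; rewrite /expectR /Rintegral integral_indic // setIT. Qed.

Lemma eq_expectR f g : f =1 g -> expectR f = expectR g.
Proof. by move=> fg; apply: eq_Rintegral => w _; exact: fg. Qed.

Lemma expectRD f g : bounded_rv f -> bounded_rv g ->
  expectR (fun w => f w + g w) = expectR f + expectR g.
Proof. by move=> bf bg; rewrite /expectR RintegralD //; exact: bounded_rv_integrable. Qed.

Lemma expectRB f g : bounded_rv f -> bounded_rv g ->
  expectR (fun w => f w - g w) = expectR f - expectR g.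
Proof. by move=> bf bg; rewrite /expectR RintegralB //; exact: bounded_rv_integrable. Qed.

Lemma expectRZ c f : bounded_rv f -> expectR (fun w => c * f w) = c * expectR f.
Proof. by move=> bf; rewrite /expectR RintegralZl //; exact: bounded_rv_integrable. Qed.

Lemma expectR_sum n (F : 'I_n -> T -> R) : (forall i, bounded_rv (F i)) ->
  expectR (fun w => \sum_(i < n) F i w) = \sum_(i < n) expectR (F i).
Proof.
elim: n F => [|n IH] F bF.
  by under eq_expectR do rewrite big_ord0; rewrite big_ord0 expectR_cst.
under eq_expectR do rewrite big_ord_recr /=.
rewrite big_ord_recr expectRD ?IH //; exact: bounded_rv_sum.
Qed.

Lemma le_expectR f g : bounded_rv f -> bounded_rv g -> (forall w, f w <= g w) ->
  expectR f <= expectR g.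
Proof. by move=> bf bg fg; rewrite /expectR le_Rintegral //; exact: bounded_rv_integrable. Qed.

Lemma expectR_itv f (a b : R) : bounded_rv f -> (forall w, a <= f w <= b) ->
  a <= expectR f <= b.
Proof.
move=> bf fab; apply/andP; split; [rewrite -[a]expectR_cst | rewrite -[b]expectR_cst];
  apply: le_expectR => //; by [exact: bounded_rv_cst | move=> w; case/andP: (fab w)].
Qed.

Lemma ler_norm_expectRB f g c : bounded_rv f -> bounded_rv g ->
  (forall w, `|f w - g w| <= c) -> `|expectR f - expectR g| <= c.
Proof.
move=> bf bg fg; rewrite -expectRB // ler_norml.
by apply: expectR_itv => [|w]; [exact: bounded_rvB | rewrite -ler_norml].
Qed.

Lemma expectR_eq_law (X Y : {RV P >-> R}) : bounded_rv X -> bounded_rv Y ->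
  (forall A, measurable A -> P (X @^-1` A) = P (Y @^-1` A)) ->
  expectR X = expectR Y.
Proof.
move=> bX bY XY; rewrite /expectR /Rintegral; congr fine.
rewrite -!(integral_distribution (@EFin_measurable _ setT)) ?bounded_rv_integrable //.
by apply: eq_measure_integral => A mA _; exact: XY.
Qed.

Lemma mean_itv (X : {RV P >-> R}) a b : (forall w, a <= X w <= b) ->
  a <= mean P X <= b.
Proof.
move=> Xab; have bX := bounded_rv_itv (measurable_funPT X) Xab.
by rewrite mean_bounded_rv //; exact: expectR_itv.
Qed.

End bounded_rv.

Definition staircase {R : realDomainType} (n : nat) (h x : R) : R :=
  \sum_(i < n) (if i.+1%:R * h <= x then h else 0).

Lemma staircase_bound {R : realDomainType} n (h x : R) : 0 < h -> 0 <= x ->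
  x <= n%:R * h -> x - h <= staircase n h x <= x.
Proof.
move=> h0 x0 xn; apply/andP.
suff [] : [/\ staircase n h x <= x, staircase n h x <= n%:R * h &
    staircase n h x = n%:R * h \/ x - h <= staircase n h x] by lra.
elim: (n) => [|m [le_x le_mh IH]].
  by rewrite /staircase big_ord0 mul0r; split=> //; left.
rewrite /staircase big_ord_recr /= -/(staircase m h x) -natr1 mulrDl mul1r.
case: ifPn => [mh_le|]; last first.
  by rewrite addr0 -ltNge => lt_mh; split; [lra | lra | right; case: IH; lra].
have -> : staircase m h x = m%:R * h by case: IH => //; lra.
by split; [lra | lra | left].
Qed.

Section tail_factorization.
Context {d : measure_display} {T : measurableType d} {R : realType}.
Variable P : probability T R.
Variables (Z X : T -> R) (M q : R).
Hypothesis bZ : bounded_rv Z.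
Hypothesis mX : measurable_fun setT X.
Hypothesis X_itv : forall w, 0 <= X w <= M.

Local Notation tail t := (X @^-1` `[t, +oo[ : set T).

Hypothesis Z_tail : forall t,
  expectR P (fun w => Z w * \1_(tail t) w) = q * fine (P (tail t)).

Lemma measurable_tail t : measurable (tail t).
Proof. by rewrite -[tail t]setTI; apply: mX => //; exact: measurable_itv. Qed.

Lemma staircase_tailE n h w :
  staircase n h (X w) = \sum_(i < n) h * \1_(tail (i.+1%:R * h)) w.
Proof.
apply: eq_bigr => i _; rewrite indicE.
have -> : (w \in tail (i.+1%:R * h)) = (i.+1%:R * h <= X w).
  by apply/idP/idP; rewrite in_setE /= in_itv /= andbT.
by case: ifP; rewrite ?mulr1 ?mulr0.
Qed.

Lemma bounded_rv_step t (h : R) : bounded_rv (fun w => h * \1_(tail t) w).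
Proof. by apply: bounded_rvM; [exact: bounded_rv_cst | exact/bounded_rv_indic/measurable_tail]. Qed.

Lemma bounded_rv_staircase n (h : R) : bounded_rv (fun w => staircase n h (X w)).
Proof.
by under eq_fun do rewrite staircase_tailE; apply: bounded_rv_sum => i; exact: bounded_rv_step.
Qed.

Lemma expectR_mul_staircase n (h : R) :
  expectR P (fun w => Z w * staircase n h (X w)) =
  q * expectR P (fun w => staircase n h (X w)).
Proof.
have b_ind t : bounded_rv (\1_(tail t) : T -> R).
  exact/bounded_rv_indic/measurable_tail.
under eq_expectR do rewrite staircase_tailE mulr_sumr.
under [in RHS]eq_expectR do rewrite staircase_tailE.
rewrite !expectR_sum => [|i|i]; last 2 first.
- exact: bounded_rv_step.
- by apply: bounded_rvM => //; exact: bounded_rv_step.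
rewrite mulr_sumr; apply: eq_bigr => i _.
under eq_expectR do rewrite mulrCA.
rewrite expectRZ; last exact: bounded_rvM.
rewrite Z_tail expectRZ // expectR_indic; last exact: measurable_tail.
by rewrite mulrCA.
Qed.

Lemma norm_expectR_mul_tails_le C h : (forall w, `|Z w| <= C) -> 0 < h ->
  `|expectR P (fun w => Z w * X w) - q * expectR P X| <= (C + `|q|) * h.
Proof.
move=> Z_le h0; have M0 : 0 <= M by case/andP: (X_itv point) => /le_trans; apply.
pose n := Num.Def.archi_bound (M / h).
have Mn : M <= n%:R * h.
  by have := archi_boundP (divr_ge0 M0 (ltW h0)); rewrite ltr_pdivrMr // => /ltW.
pose g w := staircase n h (X w).
have gX w : X w - h <= g w <= X w.
  by case/andP: (X_itv w) => X0 XM; apply: staircase_bound => //; exact: le_trans Mn.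
have bX : bounded_rv X := bounded_rv_itv mX X_itv.
have bg : bounded_rv g := bounded_rv_staircase n h.
have ZX_Zg : `|expectR P (fun w => Z w * X w) - expectR P (fun w => Z w * g w)| <= C * h.
  apply: ler_norm_expectRB => [||w]; [exact: bounded_rvM | exact: bounded_rvM |].
  rewrite -mulrBr normrM; apply: ler_pM => //; case/andP: (gX w) => ? ?.
  by rewrite ger0_norm; lra.
have X_g : `|expectR P X - expectR P g| <= h.
  apply: ler_norm_expectRB => // w; case/andP: (gX w) => ? ?.
  by rewrite ger0_norm; lra.
have -> : expectR P (fun w => Z w * X w) - q * expectR P X =
    (expectR P (fun w => Z w * X w) - expectR P (fun w => Z w * g w))
    - q * (expectR P X - expectR P g).
  by rewrite expectR_mul_staircase; ring.
apply: le_trans (ler_normB _ _) _; rewrite normrM mulrDl lerD //.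
by apply: ler_wpM2l.
Qed.

Lemma expectR_mul_from_tails :
  expectR P (fun w => Z w * X w) = q * expectR P X.
Proof.
have [_ [C Z_le]] := bZ; have C0 : 0 <= C by apply: le_trans (Z_le point).
apply/eqP; rewrite -subr_eq0 -normr_le0; apply/ler_addgt0Pr => e e0.
have A0 : 0 < C + `|q| + 1 by rewrite ltr_pwDr // addr_ge0.
apply: le_trans (norm_expectR_mul_tails_le Z_le (divr_gt0 e0 A0)) _.
by rewrite add0r mulrA ler_pdivrMr // mulrC ler_pM2l // lerDl.
Qed.

End tail_factorization.

Section infected_mean.
Context {d : measure_display} {T : measurableType d} {R : realType}.
Variable P : probability T R.
Variables (delta dI v : nat -> {RV P >-> R}) (M K I0 : R).
Hypothesis delta_itv : forall k w, 0 <= delta k w <= M.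
Hypothesis dI_itv : forall k w, 0 <= dI k w <= M.
Hypothesis v_itv : forall k w, 0 <= v k w <= M.
Hypothesis indep : joint_indep P (fun k => delta k : T -> R)
  (fun k => dI k : T -> R) (fun k => v k : T -> R).

Local Notation I := (Itraj (fun k => delta k : T -> R)
  (fun k => dI k : T -> R) (fun k => v k : T -> R) K I0).

Definition coord j c : {RV P >-> R} :=
  match c with 0 => delta j | 1 => dI j | _ => v j end.

Lemma coord_itv j c w : 0 <= coord j c w <= M.
Proof. by case: c => [|[|c]]; [exact: delta_itv | exact: dI_itv | exact: v_itv]. Qed.

Lemma bounded_rv_coord j c : bounded_rv (coord j c).
Proof. exact: bounded_rv_itv (coord_itv j c). Qed.

Definition rect n (S : nat -> nat -> set R) : set T :=
  \big[setI/setT]_(j < n)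
    (coord j 0 @^-1` S j 0 `&` coord j 1 @^-1` S j 1 `&` coord j 2 @^-1` S j 2).

Lemma in_rect n S w :
  rect n S w <-> forall j c, (j < n)%N -> (c < 3)%N -> S j c (coord j c w).
Proof.
elim: n => [|n IH]; first by rewrite /rect big_ord0.
rewrite /rect big_ord_recr /= -/(rect n S); split.
  move=> [/IH S_n [[S0 S1] S2]] j c; rewrite ltnS leq_eqVlt => /orP[/eqP ->|]; last exact: S_n.
  by case: c => [|[|[|]]].
move=> S_n1; split; first by apply/IH => j c jn; apply: S_n1; exact: ltnW.
by split; [split|]; exact: S_n1.
Qed.

Lemma measurable_rect n S : (forall j c, measurable (S j c)) -> measurable (rect n S).
Proof.
move=> mS; apply: bigsetI_measurable => j _.
by apply: measurableI; [apply: measurableI|]; exact: measurable_funPTI.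
Qed.

Lemma probability_rect n S : (forall j c, measurable (S j c)) ->
  P (rect n S) = (\prod_(j < n) (P (coord j 0%N @^-1` S j 0%N) *
    P (coord j 1%N @^-1` S j 1%N) * P (coord j 2%N @^-1` S j 2%N)))%E.
Proof. by move=> mS; exact: (indep n (mS^~ 0%N) (mS^~ 1%N) (mS^~ 2%N)). Qed.

Definition cut_slot (S : nat -> nat -> set R) k c0 t : nat -> nat -> set R :=
  fun j c => if (j == k) && (c == c0) then S j c `&` `[t, +oo[ else S j c.

Lemma measurable_cut_slot S k c0 t : (forall j c, measurable (S j c)) ->
  forall j c, measurable (cut_slot S k c0 t j c).
Proof.
move=> mS j c; rewrite /cut_slot; case: ifP => _ //.
by apply: measurableI => //; exact: measurable_itv.
Qed.

Lemma rect_cut_slot n S k c0 t : (k < n)%N -> (c0 < 3)%N ->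
  rect n (cut_slot S k c0 t) = rect n S `&` coord k c0 @^-1` `[t, +oo[.
Proof.
move=> kn c03; apply/seteqP; split => w.
  move/in_rect => Scut; split.
    apply/in_rect => j c jn c3; have := Scut j c jn c3; rewrite /cut_slot.
    by case: ifP => // _ [].
  by have := Scut k c0 kn c03; rewrite /cut_slot !eqxx /= => -[].
move=> [/in_rect S_n tw]; apply/in_rect => j c jn c3; rewrite /cut_slot.
case: ifP => [/andP[/eqP jk /eqP cc]|_]; last exact: S_n.
by split; [exact: S_n | rewrite jk cc].
Qed.

Lemma probability_rect_cut_slot n S k c0 t : (forall j c, measurable (S j c)) ->
  (forall c, S k c = setT) -> (k < n)%N -> (c0 < 3)%N ->
  P (rect n (cut_slot S k c0 t)) = (P (coord k c0 @^-1` `[t, +oo[) * P (rect n S))%E.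
Proof.
move=> mS Sk kn c03; rewrite !probability_rect //; last exact: measurable_cut_slot.
rewrite (bigD1 (Ordinal kn)) //= [in RHS](bigD1 (Ordinal kn)) //= muleA.
congr (_ * _)%E; last first.
  apply: eq_bigr => j /= jk; rewrite /cut_slot.
  by have -> : (j == k :> nat) = false by apply/negbTE.
rewrite /cut_slot eqxx /= !Sk !preimage_setT !probability_setT !mule1.
by case: c0 c03 => [|[|[|]]] //= _; rewrite ?setTI ?probability_setT ?mule1 ?mul1e.
Qed.

Lemma bounded_rv_Itraj k : bounded_rv (I k).
Proof.
elim: k => [|k IH]; first exact: bounded_rv_cst.
have -> : I k.+1 = fun w =>
    (1 + delta k w) * I k w - v k w * (K * I k w) - dI k w * I k w by [].
apply: bounded_rvB; [apply: bounded_rvB|]; apply: bounded_rvM => //.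
- by apply: bounded_rvD; [exact: bounded_rv_cst | exact: (bounded_rv_coord k 0)].
- exact: (bounded_rv_coord k 2).
- by apply: bounded_rvM => //; exact: bounded_rv_cst.
- exact: (bounded_rv_coord k 1).
Qed.

Hypothesis id_delta : ident_distr P (fun k => delta k : T -> R).
Hypothesis id_dI : ident_distr P (fun k => dI k : T -> R).
Hypothesis id_v : ident_distr P (fun k => v k : T -> R).

Lemma expectR_coord j c : expectR P (coord j c) = expectR P (coord 0 c).
Proof.
apply: expectR_eq_law; try exact: bounded_rv_coord.
by case: c => [|[|c]] A mA; [exact: id_delta | exact: id_dI | exact: id_v].
Qed.

Definition growth_factor :=
  1 + expectR P (delta 0) - K * expectR P (v 0) - expectR P (dI 0).

Definition rect_factorization k a := forall n S, (k < n)%N ->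
  (forall j c, (j < k)%N -> S j c = setT) -> (forall j c, measurable (S j c)) ->
  expectR P (fun w => I k w * \1_(rect n S) w) = a * fine (P (rect n S)).

Lemma expectR_Itraj_rect_coord k a n S c : rect_factorization k a -> (k < n)%N ->
  (forall j i, (j <= k)%N -> S j i = setT) -> (forall j c, measurable (S j c)) ->
  (c < 3)%N ->
  expectR P (fun w => I k w * \1_(rect n S) w * coord k c w) =
  a * fine (P (rect n S)) * expectR P (coord k c).
Proof.
move=> fact kn S_free mS c3; have mrect := measurable_rect n mS.
apply: (expectR_mul_from_tails (M := M)) => [||w|t].
- by apply: bounded_rvM; [exact: bounded_rv_Itraj | exact: bounded_rv_indic].
- done.
- exact: coord_itv.
transitivity (expectR P (fun w => I k w * \1_(rect n (cut_slot S k c t)) w)).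
  by apply: eq_expectR => w /=; rewrite rect_cut_slot // indicI /= mulrA.
have m_tail : measurable (coord k c @^-1` `[t, +oo[).
  by apply: measurable_funPTI; exact: measurable_itv.
rewrite fact //; last exact: measurable_cut_slot.
  rewrite probability_rect_cut_slot //; last by move=> c'; apply: S_free.
  by rewrite fineM ?fin_num_measure // mulrA mulrAC.
by move=> j c' jk; rewrite /cut_slot (ltn_eqF jk) /=; apply: S_free; exact: ltnW.
Qed.

Lemma rect_factorization_succ k a :
  rect_factorization k a -> rect_factorization k.+1 (a * growth_factor).
Proof.
move=> fact n S kn S_free mS; have kn' := ltnW kn.
have S_free' j c : (j <= k)%N -> S j c = setT by rewrite -ltnS; exact: S_free.
pose Z w := I k w * \1_(rect n S) w.
have bZ : bounded_rv Z.
  by apply: bounded_rvM; [exact: bounded_rv_Itraj | exact/bounded_rv_indic/measurable_rect].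
have bZc c : bounded_rv (fun w => Z w * coord k c w).
  by apply: bounded_rvM => //; exact: bounded_rv_coord.
have EZ : expectR P Z = a * fine (P (rect n S)).
  by apply: fact => // j c jk; apply: S_free'; exact: ltnW.
have EZc c : (c < 3)%N ->
    expectR P (fun w => Z w * coord k c w) = a * fine (P (rect n S)) * expectR P (coord k c).
  by move=> c3; apply: expectR_Itraj_rect_coord.
transitivity (expectR P (fun w =>
    Z w + Z w * coord k 0 w - K * (Z w * coord k 2 w) - Z w * coord k 1 w)).
  by apply: eq_expectR => w; rewrite /Z /=; ring.
have bZ0 := bounded_rvD bZ (bZc 0%N).
have bKZ2 : bounded_rv (fun w => K * (Z w * coord k 2 w)).
  exact: bounded_rvM (bounded_rv_cst K) (bZc 2%N).
have bZ02 := bounded_rvB bZ0 bKZ2.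
rewrite expectRB ?expectRB ?expectRD ?expectRZ //.
rewrite EZ !EZc // !(expectR_coord k) /growth_factor /=; ring.
Qed.

Lemma expectR_Itraj k : expectR P (I k) = I0 * growth_factor ^+ k.
Proof.
have fact : rect_factorization k (I0 * growth_factor ^+ k).
  elim: k => [|k IH]; last by rewrite exprSr mulrA; exact: rect_factorization_succ.
  move=> n S _ _ mS; have mrect := measurable_rect n mS.
  by rewrite expr0 mulr1 expectRZ ?expectR_indic //; exact: bounded_rv_indic.
have rectT : rect k.+1 (fun _ _ => setT) = setT.
  by apply/seteqP; split => w // _; exact/in_rect.
have := fact k.+1 (fun _ _ => setT) (ltnSn k) (fun _ _ _ => erefl) (fun _ _ => measurableT).
rewrite rectT probability_setT mulr1 => <-.
by apply: eq_expectR => w; rewrite indicE in_setT mulr1.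
Qed.

Lemma expect_Itraj k : ('E_P[I k] =
  (I0 * (1 + mean P (delta 0) - K * mean P (v 0) - mean P (dI 0)) ^+ k)%:E)%E.
Proof.
rewrite expectE_bounded_rv; last exact: bounded_rv_Itraj.
congr (_%:E); apply: eq_trans (expectR_Itraj k) _.
by rewrite !mean_bounded_rv //; [exact: (bounded_rv_coord 0 1) |
  exact: (bounded_rv_coord 0 2) | exact: (bounded_rv_coord 0 0)].
Qed.

End infected_mean.

Lemma growth_factor_itv (R : realFieldType) (a b c K dmax vmax : R) :
  0 <= a -> 0 <= b <= dmax -> dmax < 1 -> 0 < c <= vmax ->
  (a - b) / c < K -> K < (1 - dmax) / vmax -> 0 < 1 + a - K * c - b < 1.
Proof.
move=> a0 /andP[b0 bd] d1 /andP[c0 cv]; have v0 : 0 < vmax by apply: lt_le_trans cv.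
rewrite ltr_pdivrMr // ltr_pdivlMr // => K_lo K_hi; apply/andP; split; last lra.
have [K0|K0] := leP 0 K.
  have : K * c <= K * vmax by rewrite ler_wpM2l.
  lra.
have : K * c < 0 by rewrite pmulr_llt0.
lra.
Qed.

Unset Implicit Arguments.

Theorem theorem2 (R : realType) (d : measure_display) (T : measurableType d)
  (P : probability T R) (delta dI v : nat -> {RV P >-> R})
  (delta_max d_max v_min v_max S0 I0 K : R)
  (hdelta : forall k w, 0 <= delta k w <= delta_max)
  (hdI : forall k w, 0 <= dI k w <= d_max)
  (hdmax : d_max < 1)
  (hvmin : 0 < v_min)
  (hv : forall k w, v_min <= v k w <= v_max)
  (hvmax : v_max <= 1)
  (hindep : joint_indep P (fun k => delta k : T -> R) (fun k => dI k : T -> R)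
              (fun k => v k : T -> R))
  (hid_delta : ident_distr P (fun k => delta k : T -> R))
  (hid_dI : ident_distr P (fun k => dI k : T -> R))
  (hid_v : ident_distr P (fun k => v k : T -> R))
  (hsupp_delta : forall k, in_support P (delta k) delta_max)
  (hsupp_dI : forall k, in_support P (dI k) d_max)
  (hsupp_vmin : forall k, in_support P (v k) v_min)
  (hsupp_vmax : forall k, in_support P (v k) v_max)
  (hI0 : 0 < I0) (hS0 : I0 * delta_max < S0)
  (hcond : mean P (delta 0%N) < (1 - d_max) * mean P (v 0%N) / v_max) :
  let I := Itraj (fun k => delta k : T -> R) (fun k => dI k : T -> R)
             (fun k => v k : T -> R) K I0 in
  ((mean P (delta 0%N) - mean P (dI 0%N)) / mean P (v 0%N) < K ->
   K < (1 - d_max) / v_max ->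
     ((fun k => ('E_P[I k] * (I0^-1)%:E)%E) @ \oo --> (0 : \bar R))
     /\ (forall k, ('E_P[I k] <= I0%:E)%E))
  /\
  (K = (mean P (delta 0%N) - mean P (dI 0%N)) / mean P (v 0%N) ->
     forall k, ('E_P[I k] = I0%:E)%E).
Proof.
move=> I; pose M := 1 + delta_max.
have le0_delta_max : 0 <= delta_max by case/andP: (hdelta 0%N point) => /le_trans; apply.
have delta_itv k w : 0 <= delta k w <= M by case/andP: (hdelta k w) => *; rewrite /M; lra.
have dI_itv k w : 0 <= dI k w <= M by case/andP: (hdI k w) => *; rewrite /M; lra.
have v_itv k w : 0 <= v k w <= M by case/andP: (hv k w) => *; rewrite /M; lra.
have EI := expect_Itraj K I0 delta_itv dI_itv v_itv hindep hid_delta hid_dI hid_v.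
have /andP[a0 _] := mean_itv (hdelta 0%N).
have b_itv := mean_itv (hdI 0%N).
have /andP[c_lo c_hi] := mean_itv (hv 0%N).
set a := mean P (delta 0%N) in EI a0 *; set b := mean P (dI 0%N) in EI b_itv *.
set c := mean P (v 0%N) in EI c_lo c_hi *.
split=> [K_lo K_hi|K_eq k].
  have /andP[m_gt0 m_lt1] : 0 < 1 + a - K * c - b < 1.
    by apply: (growth_factor_itv a0 b_itv hdmax _ K_lo K_hi); apply/andP; split; lra.
  split=> [|k]; last by rewrite EI lee_fin ger_pMr // exprn_ile1 // ltW.
  have -> : (fun k => 'E_P[I k] * (I0^-1)%:E)%E = (fun k => ((1 + a - K * c - b) ^+ k)%:E).
    by apply: funext => k; rewrite EI -EFinM mulrAC divff ?mul1r // gt_eqF.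
  by apply: cvg_EFin; [exact: nearW | apply: cvg_expr; rewrite gtr0_norm].
have c_gt0 : 0 < c by lra.
by rewrite EI K_eq mulfVK ?gt_eqF // (_ : 1 + a - (a - b) - b = 1) ?expr1n ?mulr1 //; ring.
Qed.
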